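(* For $R>1$ let $s(R)>0$ be the unique positive number with $g_R(s(R))=s(R)$. Then $R\mapsto s(R)$ is strictly decreasing on $(1,\infty)$, and $$\lim_{R\to1^+}s(R)=\infty,\qquad\lim_{R\to\infty}s(R)=0.$$
   Context: For $R>1$, $g_R$ is the unique solution on $[0,\infty)$ of the initial value problem $$y'(w)=\frac{\arccos\!\big(\frac{w}{Ry}\big)-\arccos\!\big(\frac{w}{y}\big)\mathbf 1_{\{|w|\le|y|\}}}{R\sqrt{1-\big(\frac{w}{Ry}\big)^2}-\sqrt{1-\big(\frac{w}{y}\big)^2}\,\mathbf 1_{\{|w|\le|y|\}}},\qquad y(0)=\frac{\pi}{R-1}.$$ The function $w\mapsto w/g_R(w)$ is strictly increasing on $(0,\infty)$ with limit $0$ at $0$ and limit $R$ at $\infty$, so $s(R)$ (the unique $w>0$ with $w/g_R(w)=1$) is well defined. *)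

From Stdlib Require Import Reals Lra.
Open Scope R_scope.

Definition ode_rhs (Rr w y : R) : R :=
  let ind := if Rle_dec (Rabs w) (Rabs y) then 1 else 0 in
  (acos (w / (Rr * y)) - acos (w / y) * ind) /
  (Rr * sqrt (1 - (w / (Rr * y)) ^ 2) - sqrt (1 - (w / y) ^ 2) * ind).

Definition is_gR (Rr : R) (g : R -> R) : Prop :=
  g 0 = PI / (Rr - 1) /\
  (forall eps, 0 < eps -> exists delta, 0 < delta /\
     forall h, 0 < h < delta ->
       Rabs ((g h - g 0) / h - ode_rhs Rr 0 (g 0)) < eps) /\
  (forall w, 0 < w -> derivable_pt_lim g w (ode_rhs Rr w (g w))).

From Stdlib Require Import Reals Lra Psatz.
From Coquelicot Require Import Coquelicot.
Open Scope R_scope.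

(* For 0 < w <= y the right-hand side of the ODE depends only on a = w / y, through
   F_R(a) = K(acos a, acos (a / R)) with K(al, be) = (be - al) cos be / sin (be - al).
   Elementary trigonometry gives 0 < F_R(a) <= 3 / R, F_R(1) < 1, and F_R(a) strictly
   decreasing in R.  As F_R(1) < 1, g_R crosses the diagonal at most once, so it stays
   above it up to the fixed point s(R), and there g_R' = F_R(w / g_R) is under control.
   A strict comparison principle (a function which is smaller at first and has the
   smaller slope wherever the two touch stays smaller) then yields:
   - for a < b, g_b < g_a on (0, s(b)], since g_R(0) = pi / (R - 1) and F decreases in R;
     hence s(b) < s(a);
   - g_R(w) > g_R(0) - w, hence s(R) > pi / (2 (R - 1));
   - for R >= 8, g_R(w) < g_R(0) + w / 2, hence s(R) < 2 pi / (R - 1). *)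

Lemma sin_cos_pos x : 0 < x < PI / 2 -> 0 < sin x /\ 0 < cos x.
Proof.
  intros Hx; pose proof PI2_Rlt_PI.
  split; [apply sin_gt_0 | apply cos_gt_0]; lra.
Qed.

Lemma sin_ge_third u : 0 <= u <= 2 -> u / 3 <= sin u.
Proof.
  intros Hu; destruct (pre_sin_bound u 0) as [Hlow _]; try lra.
  unfold sin_approx, sin_term in Hlow; simpl in Hlow; nra.
Qed.

Lemma xcos_lt_sin u : 0 < u < PI / 2 -> u * cos u < sin u.
Proof.
  intros Hu.
  destruct (MVT_cor2 (fun x => sin x - x * cos x) (fun x => x * sin x) 0 u)
    as [c [Hmvt Hc]]; [lra | |].
  - intros c _; apply is_derive_Reals; auto_derive; auto; ring.
  - rewrite sin_0, cos_0 in Hmvt.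
    destruct (sin_cos_pos c) as [Hsc _]; [lra |].
    assert (0 < c * sin c * (u - 0)) by (apply Rmult_lt_0_compat; nra); lra.
Qed.

Definition xcot (u : R) : R := u * cos u / sin u.

Lemma xcot_lt_1 u : 0 < u < PI / 2 -> xcot u < 1.
Proof.
  intros Hu; destruct (sin_cos_pos u Hu) as [Hs _]; unfold xcot.
  apply Rlt_div_l; [lra |]; pose proof (xcos_lt_sin u Hu); lra.
Qed.

(* The derivative of [xcot] is [(sin u cos u - u) / sin u ^ 2], negative since [sin (2 u) < 2 u]. *)
Lemma xcot_decreasing u v : 0 < u -> u < v -> v < PI / 2 -> xcot v < xcot u.
Proof.
  intros Hu Huv Hv.
  destruct (MVT_cor2 xcot (fun c => (sin c * cos c - c) / sin c ^ 2) u v)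
    as [c [Hmvt Hc]]; [lra | |].
  - intros c Hc; destruct (sin_cos_pos c) as [Hs _]; [lra |].
    apply is_derive_Reals; unfold xcot; auto_derive; [lra |].
    pose proof (sin2_cos2 c) as E; unfold Rsqr in E.
    field_simplify_eq; [|lra].
    transitivity (cos c * sin c - c * (sin c * sin c + cos c * cos c)); [ring |].
    rewrite E; ring.
  - destruct (sin_cos_pos c) as [Hs _]; [lra |].
    assert (Hneg : sin c * cos c - c < 0).
    { pose proof (sin_lt_x (2 * c)) as H2; rewrite sin_2a in H2; lra. }
    assert ((sin c * cos c - c) / sin c ^ 2 < 0) by (apply Rdiv_neg_pos; nra).
    nra.
Qed.

Definition angle_slope (al be : R) : R := (be - al) * cos be / sin (be - al).

Section AngleSlope.
Variables al be : R.
Hypotheses (Hal : 0 <= al) (Halbe : al < be) (Hbe : be < PI / 2).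

Lemma angle_slope_pos : 0 < angle_slope al be.
Proof.
  destruct (sin_cos_pos be) as [_ Hc]; [lra |].
  destruct (sin_cos_pos (be - al)) as [Hs _]; [lra |].
  apply Rdiv_lt_0_compat; nra.
Qed.

Lemma angle_slope_le : angle_slope al be <= 3 * cos be.
Proof.
  destruct (sin_cos_pos be) as [_ Hc]; [lra |].
  destruct (sin_cos_pos (be - al)) as [Hs _]; [lra |].
  pose proof PI_4; pose proof (sin_ge_third (be - al)).
  apply Rle_div_l; nra.
Qed.

Lemma angle_slope_xcot :
  angle_slope al be = cos al * xcot (be - al) - sin al * (be - al).
Proof.
  destruct (sin_cos_pos (be - al)) as [Hs _]; [lra |].
  unfold angle_slope, xcot.
  replace be with (al + (be - al)) at 2 by ring.
  rewrite cos_plus; field; lra.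
Qed.

End AngleSlope.

Lemma angle_slope_0_lt_1 be : 0 < be < PI / 2 -> angle_slope 0 be < 1.
Proof.
  intros Hbe; rewrite angle_slope_xcot by lra.
  rewrite cos_0, sin_0, Rminus_0_r; pose proof (xcot_lt_1 be Hbe); lra.
Qed.

Lemma angle_slope_decreasing al b1 b2 :
  0 <= al < b1 -> b1 < b2 -> b2 < PI / 2 -> angle_slope al b2 < angle_slope al b1.
Proof.
  intros Hb1 Hb12 Hb2; rewrite !angle_slope_xcot by lra.
  pose proof PI2_Rlt_PI.
  assert (Hc : 0 < cos al) by (apply cos_gt_0; lra).
  assert (Hs : 0 <= sin al) by (apply sin_ge_0; lra).
  pose proof (xcot_decreasing (b1 - al) (b2 - al)); nra.
Qed.

Definition rhs_ratio (Rr a : R) : R :=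
  (acos (a / Rr) - acos a) / (Rr * sqrt (1 - (a / Rr) ^ 2) - sqrt (1 - a ^ 2)).

Lemma ode_rhs_ratio Rr w y : 0 < Rr -> 0 < w <= y -> ode_rhs Rr w y = rhs_ratio Rr (w / y).
Proof.
  intros HR Hw; unfold ode_rhs, rhs_ratio.
  destruct (Rle_dec (Rabs w) (Rabs y)) as [_ | Hn].
  - replace (w / (Rr * y)) with (w / y / Rr) by (field; lra); f_equal; ring.
  - exfalso; apply Hn; rewrite !Rabs_right; lra.
Qed.

Lemma ode_rhs_at_0 Rr y : ode_rhs Rr 0 y = 0.
Proof.
  unfold ode_rhs, Rdiv; rewrite !Rmult_0_l.
  destruct Rle_dec as [_ | Hn].
  - rewrite Rmult_1_r, Rminus_diag; ring.
  - exfalso; apply Hn; rewrite Rabs_R0; apply Rabs_pos.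
Qed.

Section RhsRatio.
Variables Rr a : R.
Hypotheses (HR : 1 < Rr) (Ha : 0 < a <= 1).

Lemma acos_ratio_bounds :
  0 <= acos a < acos (a / Rr) /\ acos (a / Rr) < PI / 2 /\ cos (acos (a / Rr)) = a / Rr.
Proof.
  assert (Hq : 0 < a / Rr < a).
  { split; [apply Rdiv_lt_0_compat | apply Rlt_div_l]; nra. }
  pose proof (acos_bound a); pose proof (acos_bound (a / Rr)).
  pose proof (cos_acos a ltac:(lra)); pose proof (cos_acos (a / Rr) ltac:(lra)).
  pose proof PI2_Rlt_PI; pose proof PI2_RGT_0.
  repeat split; try lra.
  - apply cos_decreasing_0; lra.
  - apply cos_decreasing_0; try lra; rewrite cos_PI2; lra.
Qed.

(* With [al = acos a] and [be = acos (a / Rr)] one has [Rr = cos al / cos be]. *)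
Lemma rhs_ratio_angle_slope : rhs_ratio Rr a = angle_slope (acos a) (acos (a / Rr)).
Proof.
  destruct acos_ratio_bounds as [[H0 H1] [H2 Hcb]].
  assert (Hq : 0 < a / Rr < a).
  { split; [apply Rdiv_lt_0_compat | apply Rlt_div_l]; nra. }
  assert (Ea : sqrt (1 - a ^ 2) = sin (acos a))
    by (rewrite sin_acos by lra; unfold Rsqr; f_equal; ring).
  assert (Eb : sqrt (1 - (a / Rr) ^ 2) = sin (acos (a / Rr)))
    by (rewrite sin_acos by lra; unfold Rsqr; f_equal; ring).
  unfold rhs_ratio, angle_slope; rewrite Ea, Eb.
  set (al := acos a) in *; set (be := acos (a / Rr)) in *.
  assert (Hca : cos al = a) by (apply cos_acos; lra).
  destruct (sin_cos_pos be) as [_ Hc]; [lra |].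
  destruct (sin_cos_pos (be - al)) as [Hs _]; [lra |].
  assert (ER : Rr = cos al / cos be) by (rewrite Hca, Hcb; field; lra).
  assert (Rr * sin be - sin al = sin (be - al) / cos be)
    by (rewrite sin_minus, ER; field; lra).
  rewrite H; field; lra.
Qed.

Lemma rhs_ratio_pos : 0 < rhs_ratio Rr a.
Proof.
  rewrite rhs_ratio_angle_slope; destruct acos_ratio_bounds as [? [? _]].
  apply angle_slope_pos; lra.
Qed.

Lemma rhs_ratio_le : rhs_ratio Rr a <= 3 / Rr.
Proof.
  rewrite rhs_ratio_angle_slope; destruct acos_ratio_bounds as [? [? Hcb]].
  eapply Rle_trans; [apply angle_slope_le; lra |]; rewrite Hcb.
  unfold Rdiv; assert (0 < / Rr) by (apply Rinv_0_lt_compat; lra); nra.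
Qed.

End RhsRatio.

Lemma rhs_ratio_1_lt_1 Rr : 1 < Rr -> rhs_ratio Rr 1 < 1.
Proof.
  intros HR; rewrite rhs_ratio_angle_slope by lra.
  destruct (acos_ratio_bounds Rr 1) as [? [? _]]; [lra .. |].
  rewrite acos_1 in *; apply angle_slope_0_lt_1; lra.
Qed.

Lemma rhs_ratio_decreasing R1 R2 a :
  1 < R1 -> R1 < R2 -> 0 < a <= 1 -> rhs_ratio R2 a < rhs_ratio R1 a.
Proof.
  intros HR1 HR12 Ha; rewrite !rhs_ratio_angle_slope by lra.
  destruct (acos_ratio_bounds R1 a) as [? [? E1]]; [lra .. |].
  destruct (acos_ratio_bounds R2 a) as [? [? E2]]; [lra .. |].
  apply angle_slope_decreasing; try lra.
  pose proof (acos_bound (a / R1)); pose proof (acos_bound (a / R2)).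
  apply cos_decreasing_0; try lra; rewrite E1, E2.
  apply Rmult_lt_compat_l; [lra | apply Rinv_lt_contravar; nra].
Qed.

Lemma continuity_pt_pos f z :
  continuity_pt f z -> 0 < f z -> exists d, 0 < d /\ forall x, Rabs (x - z) < d -> 0 < f x.
Proof.
  intros Hc Hz; destruct (Hc (f z) Hz) as [d [Hd Hnear]].
  exists d; split; [lra |]; intros x Hx.
  destruct (Req_dec x z) as [-> | Hne]; [lra |].
  assert (Hfx : R_dist (f x) (f z) < f z) by (apply Hnear; repeat split; auto).
  unfold R_dist in Hfx; apply Rabs_def2 in Hfx; lra.
Qed.

Lemma derivable_pt_lim_quotient_pos f t l :
  derivable_pt_lim f t l -> 0 < l ->
  exists d, 0 < d /\ forall h, h <> 0 -> Rabs h < d -> 0 < (f (t + h) - f t) / h.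
Proof.
  intros Hd Hl; destruct (Hd (l / 2) ltac:(lra)) as [d Hq].
  exists d; split; [apply cond_pos |]; intros h Hh Hhd.
  specialize (Hq h Hh Hhd); apply Rabs_def2 in Hq; lra.
Qed.

Lemma pos_right_of f p l :
  derivable_pt_lim f p l -> 0 <= f p -> (f p = 0 -> 0 < l) ->
  exists d, 0 < d /\ forall t, p < t < p + d -> 0 < f t.
Proof.
  intros Hd Hp Hl; destruct (Rle_lt_or_eq_dec _ _ Hp) as [Hpos | Hzero].
  - pose proof (derivable_continuous_pt f p (exist _ l Hd)) as Hc.
    destruct (continuity_pt_pos f p Hc Hpos) as [d [Hd0 Hnear]].
    exists d; split; [lra |]; intros t Ht; apply Hnear; rewrite Rabs_right; lra.
  - destruct (derivable_pt_lim_quotient_pos f p l Hd (Hl (eq_sym Hzero)))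
      as [d [Hd0 Hq]].
    exists d; split; [lra |]; intros t Ht.
    specialize (Hq (t - p) ltac:(lra) ltac:(rewrite Rabs_right; lra)).
    replace (p + (t - p)) with t in Hq by ring; rewrite <- Hzero in Hq.
    apply Rdiv_pos_cases in Hq; lra.
Qed.

Lemma first_zero f a t0 :
  (exists d, 0 < d /\ forall t, a < t < a + d -> 0 < f t) ->
  (forall t, a < t <= t0 -> continuity_pt f t) ->
  a < t0 -> f t0 <= 0 ->
  exists z, a < z <= t0 /\ f z = 0 /\ forall t, a < t < z -> 0 < f t.
Proof.
  intros [d [Hd Hinit]] Hc Ht0 Hf0.
  set (E := fun x => a < x <= t0 /\ forall t, a < t <= x -> 0 < f t).
  set (x0 := Rmin t0 (a + d / 2)).
  assert (Hx0 : E x0).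
  { assert (x0 <= a + d / 2) by apply Rmin_r.
    split; [split; [apply Rmin_glb_lt | apply Rmin_l]; lra |].
    intros t Ht; apply Hinit; lra. }
  assert (Hbound : bound E) by (exists t0; intros x [Hx _]; lra).
  destruct (completeness E Hbound (ex_intro _ x0 Hx0)) as [z [Hub Hlub]].
  assert (Hx0z : x0 <= z) by (apply Hub, Hx0).
  assert (Hzt0 : z <= t0) by (apply Hlub; intros x [Hx _]; lra).
  assert (Haz : a < z) by (destruct Hx0; lra).
  assert (Hbelow : forall t, a < t < z -> 0 < f t).
  { intros t Ht; destruct (Rlt_le_dec 0 (f t)) as [| Hft]; [auto | exfalso].
    assert (z <= t); [| lra].
    apply Hlub; intros x [Hx Hpos]; destruct (Rle_lt_dec x t); [auto |].
    specialize (Hpos t ltac:(lra)); lra. }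
  exists z; repeat split; auto.
  destruct (Rtotal_order (f z) 0) as [Hneg | [Hzero | Hpos]]; auto; exfalso.
  - destruct (continuity_pt_pos (fun x => - f x) z (continuity_pt_opp _ _ (Hc z ltac:(lra))))
      as [e [He Hnear]]; [lra |].
    set (t := Rmax ((a + z) / 2) (z - e / 2)).
    assert ((a + z) / 2 <= t) by apply Rmax_l.
    assert (z - e / 2 <= t) by apply Rmax_r.
    assert (t < z) by (apply Rmax_lub_lt; lra).
    specialize (Hnear t ltac:(rewrite Rabs_left; lra)).
    specialize (Hbelow t ltac:(lra)); lra.
  - assert (Hzt : z < t0) by (destruct (Req_dec z t0); subst; lra).
    destruct (continuity_pt_pos f z (Hc z ltac:(lra)) Hpos) as [e [He Hnear]].
    set (x1 := Rmin t0 (z + e / 2)).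
    assert (x1 <= z + e / 2) by apply Rmin_r.
    assert (z < x1) by (apply Rmin_glb_lt; lra).
    assert (x1 <= z); [| lra].
    apply Hub; split; [split; [lra | apply Rmin_l] |].
    intros t Ht; destruct (Rlt_le_dec t z); [apply Hbelow; lra |].
    apply Hnear; rewrite Rabs_right; lra.
Qed.

Lemma strict_comparison (u v u' v' : R -> R) a b :
  (exists d, 0 < d /\ forall t, a < t < a + d -> u t < v t) ->
  (forall t, a < t <= b -> derivable_pt_lim u t (u' t)) ->
  (forall t, a < t <= b -> derivable_pt_lim v t (v' t)) ->
  (forall t, a < t <= b -> u t = v t -> u' t < v' t) ->
  forall t, a < t <= b -> u t < v t.
Proof.
  intros [d [Hd Hinit]] Hu Hv Htouch t0 Ht0.
  set (f := fun x => v x - u x).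
  assert (Hf : forall t, a < t <= b -> derivable_pt_lim f t (v' t - u' t))
    by (intros t Ht; apply derivable_pt_lim_minus; auto).
  destruct (Rlt_le_dec 0 (f t0)) as [| Hf0]; [unfold f in *; lra | exfalso].
  destruct (first_zero f a t0) as [z [Hz [Hfz Hbelow]]]; auto; try lra.
  - exists d; split; [lra |]; intros t Ht; specialize (Hinit t Ht); unfold f; lra.
  - intros t Ht; apply derivable_continuous_pt; exists (v' t - u' t); apply Hf; lra.
  - assert (u' z < v' z) by (apply Htouch; unfold f in Hfz; lra).
    assert (Hslope : 0 < v' z - u' z) by lra.
    destruct (derivable_pt_lim_quotient_pos f z _ (Hf z ltac:(lra)) Hslope)
      as [e [He Hq]].
    set (h := Rmin (e / 2) ((z - a) / 2)).
    assert (h <= e / 2) by apply Rmin_l.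
    assert (h <= (z - a) / 2) by apply Rmin_r.
    assert (0 < h) by (apply Rmin_pos; lra).
    specialize (Hq (- h) ltac:(lra) ltac:(rewrite Rabs_Ropp, Rabs_right; lra)).
    specialize (Hbelow (z + - h) ltac:(lra)).
    rewrite Hfz in Hq; apply Rdiv_pos_cases in Hq; lra.
Qed.

Lemma derivable_pt_lim_affine c m t : derivable_pt_lim (fun x => c + m * x) t m.
Proof. apply is_derive_Reals; auto_derive; [auto | ring]. Qed.

Section Solution.
Variables (Rr : R) (g : R -> R).
Hypotheses (HR : 1 < Rr) (Hg : is_gR Rr g).

Lemma solution_at_0 : g 0 = PI / (Rr - 1).
Proof. apply Hg. Qed.

(* The right derivative at [0] is [ode_rhs Rr 0 (g 0) = 0]. *)
Lemma solution_flat_at_0 eps :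
  0 < eps -> exists d, 0 < d /\ forall t, 0 < t < d -> Rabs (g t - g 0) < eps * t.
Proof.
  intros He; destruct Hg as [_ [Hright _]].
  destruct (Hright eps He) as [d [Hd Hq]]; exists d; split; [auto |].
  intros t Ht; specialize (Hq t Ht); rewrite ode_rhs_at_0, Rminus_0_r in Hq.
  replace (g t - g 0) with ((g t - g 0) / t * t) by (field; lra).
  rewrite Rabs_mult, (Rabs_right t) by lra; nra.
Qed.

Lemma solution_deriv t : 0 < t -> derivable_pt_lim g t (ode_rhs Rr t (g t)).
Proof. apply Hg. Qed.

Lemma ode_rhs_diag_lt_1 t : 0 < t -> ode_rhs Rr t t < 1.
Proof.
  intros Ht; rewrite ode_rhs_ratio by lra.
  replace (t / t) with 1 by (field; lra); apply rhs_ratio_1_lt_1, HR.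
Qed.

(* Where [g] meets the diagonal it crosses it with slope [< 1], so it can never come back. *)
Lemma lt_id_of_le_id p q : 0 < p < q -> g p <= p -> g q < q.
Proof.
  intros Hpq Hp.
  apply (strict_comparison g id (fun t => ode_rhs Rr t (g t)) (fun _ => 1) p q); try lra.
  - destruct (pos_right_of (fun x => id x - g x) p (1 - ode_rhs Rr p (g p)))
      as [d [Hd Hpos]].
    + apply derivable_pt_lim_minus; [apply derivable_pt_lim_id | apply solution_deriv; lra].
    + unfold id; lra.
    + intros Hgp; assert (Hfix : g p = p) by (unfold id in Hgp; lra).
      rewrite Hfix; pose proof (ode_rhs_diag_lt_1 p ltac:(lra)); lra.
    + exists d; split; [auto |]; intros t Ht; specialize (Hpos t Ht); lra.
  - intros t Ht; apply solution_deriv; lra.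
  - intros t Ht; apply derivable_pt_lim_id.
  - intros t Ht Hgt; unfold id in Hgt; rewrite Hgt; apply ode_rhs_diag_lt_1; lra.
Qed.

Variable s : R.
Hypotheses (Hs : 0 < s) (Hgs : g s = s).

Lemma le_solution t : 0 < t <= s -> t <= g t.
Proof.
  intros Ht; destruct (Rle_dec t (g t)) as [| Hlt]; [auto | exfalso].
  destruct (Req_dec t s) as [-> | Hts]; [lra |].
  assert (g s < s) by (apply (lt_id_of_le_id t s); lra); lra.
Qed.

Lemma ratio_bounds t : 0 < t <= s -> 0 < t / g t <= 1.
Proof.
  intros Ht; pose proof (le_solution t Ht).
  split; [apply Rdiv_lt_0_compat | apply Rle_div_l]; lra.
Qed.

Lemma solution_deriv_ratio t :
  0 < t <= s -> derivable_pt_lim g t (rhs_ratio Rr (t / g t)).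
Proof.
  intros Ht; rewrite <- ode_rhs_ratio by (pose proof (le_solution t Ht); lra).
  apply solution_deriv; lra.
Qed.

Lemma fixed_point_lower : PI < 2 * (Rr - 1) * s.
Proof.
  assert (Hcmp : g 0 + -1 * s < g s).
  { apply (strict_comparison (fun t => g 0 + -1 * t) g (fun _ => -1)
             (fun t => rhs_ratio Rr (t / g t)) 0 s); try lra.
    - destruct (solution_flat_at_0 1) as [d [Hd Hflat]]; [lra |].
      exists d; split; [auto |]; intros t Ht.
      specialize (Hflat t ltac:(lra)); apply Rabs_def2 in Hflat; lra.
    - intros t _; apply derivable_pt_lim_affine.
    - apply solution_deriv_ratio.
    - intros t Ht _; pose proof (rhs_ratio_pos Rr (t / g t) HR (ratio_bounds t Ht)); lra. }
  rewrite solution_at_0 in Hcmp.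
  assert (PI / (Rr - 1) * (Rr - 1) = PI) by (field; lra); nra.
Qed.

Lemma fixed_point_upper : 8 <= Rr -> (Rr - 1) * s < 2 * PI.
Proof.
  intros H8.
  assert (Hcmp : g s < g 0 + / 2 * s).
  { apply (strict_comparison g (fun t => g 0 + / 2 * t)
             (fun t => rhs_ratio Rr (t / g t)) (fun _ => / 2) 0 s); try lra.
    - destruct (solution_flat_at_0 (/ 2)) as [d [Hd Hflat]]; [lra |].
      exists d; split; [auto |]; intros t Ht.
      specialize (Hflat t ltac:(lra)); apply Rabs_def2 in Hflat; lra.
    - apply solution_deriv_ratio.
    - intros t _; apply derivable_pt_lim_affine.
    - intros t Ht _; pose proof (rhs_ratio_le Rr (t / g t) HR (ratio_bounds t Ht)).
      assert (3 / Rr < / 2) by (apply Rlt_div_l; lra); lra. }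
  rewrite solution_at_0 in Hcmp.
  assert (PI / (Rr - 1) * (Rr - 1) = PI) by (field; lra); nra.
Qed.

End Solution.

Lemma fixed_point_decreasing a b g1 g2 s1 s2 :
  1 < a -> a < b -> is_gR a g1 -> is_gR b g2 ->
  0 < s1 -> g1 s1 = s1 -> 0 < s2 -> g2 s2 = s2 -> s2 < s1.
Proof.
  intros Ha Hab Hg1 Hg2 Hs1 Hgs1 Hs2 Hgs2.
  assert (Hcmp : g2 s2 < g1 s2).
  { apply (strict_comparison g2 g1 (fun t => rhs_ratio b (t / g2 t))
             (fun t => ode_rhs a t (g1 t)) 0 s2); try lra.
    - assert (Hinit : g2 0 < g1 0).
      { rewrite (solution_at_0 a g1), (solution_at_0 b g2) by auto.
        apply Rmult_lt_compat_l; [apply PI_RGT_0 | apply Rinv_lt_contravar; nra]. }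
      destruct (solution_flat_at_0 a g1 Hg1 1) as [d1 [Hd1 Hflat1]]; [lra |].
      destruct (solution_flat_at_0 b g2 Hg2 1) as [d2 [Hd2 Hflat2]]; [lra |].
      exists (Rmin (Rmin d1 d2) ((g1 0 - g2 0) / 2)).
      split; [repeat apply Rmin_pos; lra |]; intros t Ht.
      assert (Rmin (Rmin d1 d2) ((g1 0 - g2 0) / 2) <= Rmin d1 d2) by apply Rmin_l.
      assert (Rmin (Rmin d1 d2) ((g1 0 - g2 0) / 2) <= (g1 0 - g2 0) / 2) by apply Rmin_r.
      assert (Rmin d1 d2 <= d1) by apply Rmin_l; assert (Rmin d1 d2 <= d2) by apply Rmin_r.
      specialize (Hflat1 t ltac:(lra)); specialize (Hflat2 t ltac:(lra)).
      apply Rabs_def2 in Hflat1; apply Rabs_def2 in Hflat2; lra.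
    - intros t Ht; apply (solution_deriv_ratio b g2 ltac:(lra) Hg2 s2); auto.
    - intros t Ht; apply (solution_deriv a g1 Hg1); lra.
    - intros t Ht Hgt.
      pose proof (le_solution b g2 ltac:(lra) Hg2 s2 Hgs2 t Ht).
      rewrite ode_rhs_ratio, <- Hgt by lra.
      apply rhs_ratio_decreasing; auto; apply (ratio_bounds b g2 ltac:(lra) Hg2 s2); auto. }
  destruct (Rtotal_order s2 s1) as [| [-> | Hlt]]; [auto | lra | exfalso].
  assert (g1 s2 < s2) by (apply (lt_id_of_le_id a g1 Ha Hg1 s1); lra); lra.
Qed.

Theorem proposition3p2 (s : R -> R)
  (Hs : forall Rr, 1 < Rr ->
     exists g, is_gR Rr g /\ 0 < s Rr /\ g (s Rr) = s Rr) :
  (forall a b, 1 < a -> a < b -> s b < s a) /\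
  (forall M, exists d, 0 < d /\ forall Rr, 1 < Rr < 1 + d -> M < s Rr) /\
  (forall eps, 0 < eps -> exists N, forall Rr, N < Rr -> 1 < Rr -> Rabs (s Rr) < eps).
Proof.
  split; [| split].
  - intros a b Ha Hab.
    destruct (Hs a Ha) as [g1 [Hg1 [Hs1 Hgs1]]].
    destruct (Hs b ltac:(lra)) as [g2 [Hg2 [Hs2 Hgs2]]].
    exact (fixed_point_decreasing a b g1 g2 _ _ Ha Hab Hg1 Hg2 Hs1 Hgs1 Hs2 Hgs2).
  - intros M; pose proof (Rle_abs M); pose proof (Rabs_pos M).
    exists (/ (Rabs M + 1)); split; [apply Rinv_0_lt_compat; lra |]; intros Rr HR.
    destruct (Hs Rr ltac:(lra)) as [g [Hg [Hpos Hgs]]].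
    pose proof (fixed_point_lower Rr g ltac:(lra) Hg _ Hpos Hgs); pose proof PI2_1.
    assert ((Rr - 1) * (Rabs M + 1) < 1).
    { apply Rlt_div_r; [lra | unfold Rdiv; lra]. }
    nra.
  - intros eps He; exists (Rmax 8 (1 + 8 / eps)); intros Rr HN HR.
    pose proof (Rmax_l 8 (1 + 8 / eps)); pose proof (Rmax_r 8 (1 + 8 / eps)).
    destruct (Hs Rr HR) as [g [Hg [Hpos Hgs]]].
    pose proof (fixed_point_upper Rr g HR Hg _ Hpos Hgs ltac:(lra)); pose proof PI_4.
    assert (8 < (Rr - 1) * eps) by (apply Rlt_div_l; lra).
    rewrite Rabs_right; nra.
Qed.
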